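(* Let $t\ge 3$ be an integer and let $G=(V,E)$ be a $t$-hypergraph with $|V|=s\ge 2$ vertices and $|E|=m$ hyperedges. Let $k\in\mathbb{N}$ satisfy $2^{t+2}\log(s)\le k\le s$. If \[ m \;\ge\; 3s\left(\frac{2^{t+3}\cdot s\cdot\log(s)}{k}\right)^{t-2}, \] then there exists a subset $S\subseteq V$ with $|S|\le k$ that spans at least $|S| + \frac{k}{2^{t+1}\log(s)}$ hyperedges.
   Context: A $t$-hypergraph is a hypergraph in which every hyperedge is a set of at most $t$ distinct vertices, and parallel (repeated) hyperedges are allowed and counted with multiplicity. A set of vertices $S$ spans a hyperedge $e$ if all vertices of $e$ lie in $S$. Logarithms are base 2. *)

From mathcomp Require Import all_boot.
From Stdlib Require Import Reals.
Set Implicit Arguments. Unset Strict Implicit. Unset Printing Implicit Defensive.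

Definition log2 (x : R) : R := (ln x / ln 2)%R.

(* A t-hypergraph on vertex set V: a multiset (seq) of hyperedges,
   each a nonempty set of at most t vertices. *)
Definition is_t_hypergraph (V : finType) (t : nat) (E : seq {set V}) : bool :=
  all (fun e : {set V} => (0 < #|e|) && (#|e| <= t)) E.

Definition spanned (V : finType) (E : seq {set V}) (S : {set V}) : nat :=
  count (fun e : {set V} => e \subset S) E.

(* Put q = t - 2 and u = k / (16 q log s).  Adding the u vertices of largest
   degree among the largest remaining hyperedges removes one vertex from each
   of these while keeping a u/s share of all hyperedges; after q rounds a set U
   of q u vertices leaves at least 6 s hyperedges with at most two vertices
   outside U.  A multigraph with more than 4 s edges has a core of minimum
   degree 5, in which breadth-first balls grow by a factor 5/2 until one spans
   more edges than vertices, at radius at most log s + 1; two non-tree edges of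
   that ball with their tree paths to the root give at most 4 log s + 8
   vertices spanning more edges than vertices.  Repeating this greedily on the
   remaining edges yields a set T, and U + T is the required set. *)

From mathcomp Require Import all_boot zify.
From Stdlib Require Import Reals Lra.
(* Importing Reals rebinds [_ ^ _] on nat to [Nat.pow] and [ring] to the Stdlib
   tactic; the ssrnat notations and the MathComp [ring] are restored. *)
From mathcomp Require Import ssrnat ring.
Set Implicit Arguments. Unset Strict Implicit. Unset Printing Implicit Defensive.

(** * Shrinking hyperedges *)

Lemma exists_heaviest_set (V : finType) (w : V -> nat) u : u <= #|V| ->
  exists U : {set V}, #|U| = u /\ forall v y, v \in U -> y \notin U -> w y <= w v.
Proof.
elim: u => [|u IH] hu.
  by exists set0; split; [rewrite cards0 | move=> v y; rewrite in_set0].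
have [U [cU heavyU]] := IH (ltnW hu).
have [x0 _ x0U] : exists2 x0, x0 \in setT & x0 \notin U.
  apply/subsetPn; apply/negP=> /subset_leq_card; rewrite cardsT cU; lia.
pose x := [arg max_(x > x0 | x \notin U) w x].
have [xU xmax] : x \notin U /\ forall y, y \notin U -> w y <= w x.
  by rewrite /x; case: arg_maxnP => // z zU zm; split.
exists (x |: U); split; first by rewrite cardsU1 xU cU.
move=> v y; rewrite !in_setU1 negb_or => /orP[/eqP->|vU] /andP[_ yU].
  exact: xmax.
exact: heavyU.
Qed.

Lemma exists_heavy_set (V : finType) (w : V -> nat) u : u <= #|V| ->
  exists U : {set V}, #|U| = u /\ u * \sum_v w v <= #|V| * \sum_(v in U) w v.
Proof.
move=> hu; have [U [cU heavyU]] := exists_heaviest_set w hu.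
exists U; split=> //; set S := \sum_(v in U) w v.
have outside : u * \sum_(y in ~: U) w y <= #|~: U| * S.
  rewrite big_distrr /= -sum_nat_const; apply: leq_sum => y; rewrite inE => yU.
  by rewrite -cU -sum_nat_const /S; apply: leq_sum => v vU; apply: heavyU.
rewrite (bigID (mem U)) /= -/S mulnDr.
rewrite (eq_bigl (mem (~: U))); last by move=> y; rewrite !inE.
rewrite cardsCs setCK cU in outside.
have -> : #|V| * S = u * S + (#|V| - u) * S by rewrite -mulnDl subnKC.
by rewrite leq_add2l.
Qed.

Definition nspan (V I : finType) (P : {set I}) (f : I -> {set V}) (S : {set V}) :=
  #|[set i in P | f i \subset S]|.

Lemma card_sub_sum (I : finType) (B : {set I}) (p : pred I) :
  #|[set i in B | p i]| = \sum_(i in B) p i.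
Proof.
rewrite -sum1_card [RHS](eq_bigr (fun i => if p i then 1 else 0)) => [|i _].
  by rewrite -big_mkcondr; apply: eq_bigl => i; rewrite inE.
by case: (p i).
Qed.

Lemma sum_degrees (V I : finType) (B : {set I}) (f : I -> {set V}) (A : {set V}) :
  \sum_(v in A) #|[set i in B | v \in f i]| = \sum_(i in B) #|f i :&: A|.
Proof.
under eq_bigr do rewrite card_sub_sum.
rewrite exchange_big /=; apply: eq_bigr => i _.
rewrite -(card_sub_sum A (mem (f i))); apply: eq_card => v; by rewrite !inE andbC.
Qed.

(* The [u] vertices of largest degree carry a [u / #|V|] share of the
   [c * #|B|] incidences, and an edge meeting [U] accounts for at most [c]. *)
Lemma exists_hitting_set (V I : finType) (B : {set I}) (f : I -> {set V}) c u :
  0 < c -> (forall i, i \in B -> #|f i| = c) -> u <= #|V| ->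
  exists U : {set V}, #|U| = u /\
    u * #|B| <= #|V| * #|[set i in B | f i :&: U != set0]|.
Proof.
move=> c0 hc hu; pose w v := #|[set i in B | v \in f i]|.
have [U [cU heavyU]] := exists_heavy_set w hu.
exists U; split=> //.
have sum_all : \sum_v w v = c * #|B|.
  rewrite (eq_bigl (fun v => v \in [set: V])); last by move=> v; rewrite in_setT.
  rewrite sum_degrees mulnC -sum_nat_const; apply: eq_bigr => i iB.
  by rewrite setIT hc.
have sum_U : \sum_(v in U) w v <= c * #|[set i in B | f i :&: U != set0]|.
  rewrite sum_degrees card_sub_sum big_distrr /=; apply: leq_sum => i iB.
  case: eqP => [->|_]; first by rewrite cards0.
  by rewrite muln1 -(hc i iB) subset_leq_card ?subsetIl.
rewrite -(leq_pmul2l c0) mulnCA -sum_all mulnCA.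
by rewrite (leq_trans heavyU) // leq_mul2l sum_U orbT.
Qed.

Lemma shrink_largest_edges (V I : finType) (P : {set I}) (f : I -> {set V}) c u :
  (forall i, i \in P -> #|f i| <= c.+1) -> u <= #|V| ->
  exists U : {set V}, #|U| = u /\
    u * #|P| <= #|V| * #|[set i in P | #|f i :\: U| <= c]|.
Proof.
move=> hf hu; pose Big := [set i in P | #|f i| == c.+1].
have [|U [cU hitU]] := @exists_hitting_set _ _ Big f c.+1 u isT _ hu.
  by move=> i; rewrite inE => /andP[_ /eqP].
exists U; split=> //; set G := [set i in P | #|f i :\: U| <= c].
have BigP : Big \subset P by apply/subsetP=> i; rewrite inE => /andP[].
have hit_good : [set i in Big | f i :&: U != set0] \subset G :&: Big.
  apply/subsetP=> i; rewrite !inE => /andP[/andP[iP /eqP fi] meet].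
  have : 0 < #|f i :&: U| by rewrite card_gt0.
  by rewrite iP fi eqxx cardsD fi /=; lia.
have rest_good : P :\: Big \subset G :\: Big.
  apply/subsetP=> i; rewrite !inE => /andP[small iP].
  rewrite small iP /=; have := hf i iP; rewrite iP /= in small.
  have : #|f i :\: U| <= #|f i| by rewrite subset_leq_card ?subsetDl.
  by move: small => /eqP; lia.
rewrite -(cardsID Big G) -(cardsID Big P) (setIidPr BigP) !mulnDr.
apply: leq_add; first by rewrite (leq_trans hitU) ?leq_mul2l ?subset_leq_card ?orbT.
by rewrite leq_mul ?subset_leq_card.
Qed.

Lemma shrink_edges (V I : finType) b c u (P : {set I}) (f : I -> {set V}) :
  (forall i, i \in P -> #|f i| <= c + b) -> u <= #|V| ->
  exists U : {set V}, #|U| <= c * u /\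
    u ^ c * #|P| <= #|V| ^ c * #|[set i in P | #|f i :\: U| <= b]|.
Proof.
move=> hf hu; elim: c P f hf => [|c IH] P f hf.
  exists set0; split; first by rewrite cards0.
  by rewrite !mul1n subset_leq_card //; apply/subsetP=> i iP; rewrite inE iP setD0 hf.
rewrite addSn in hf; have [U1 [cU1 shrink1]] := shrink_largest_edges hf hu.
set P1 := [set i in P | _] in shrink1.
have [|U2 [cU2 shrink2]] := IH P1 (fun i => f i :\: U1).
  by move=> i; rewrite inE => /andP[].
exists (U1 :|: U2); split.
  by rewrite (leq_trans (leq_card_setU _ _)) // cU1 mulSn leq_add2l.
have P1_good : [set i in P1 | #|f i :\: U1 :\: U2| <= b] \subset
               [set i in P | #|f i :\: (U1 :|: U2)| <= b].
  by apply/subsetP=> i; rewrite !inE setDDl => /andP[/andP[-> _] ->].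
rewrite expnSr -mulnA (leq_trans (leq_mul (leqnn _) shrink1)) //.
rewrite mulnCA expnS -mulnA leq_mul2l (leq_trans shrink2) ?orbT //.
by rewrite leq_mul2l subset_leq_card ?orbT.
Qed.

Lemma card_bigcup_le (T I : finType) (J : {set I}) (F : I -> {set T}) c :
  (forall j, j \in J -> #|F j| <= c) -> #|\bigcup_(j in J) F j| <= #|J| * c.
Proof.
move=> hF; rewrite -sum_nat_const.
elim/big_rec2: _ => [|j n A jJ IH]; first by rewrite cards0.
by rewrite (leq_trans (leq_card_setU _ _)) // leq_add ?hF.
Qed.

(** * Dense subgraphs of multigraphs *)

(* A minimal [W] with [4 * #|W| < nspan P f W] has minimum degree 5: deleting
   a vertex of degree at most 4 would preserve the inequality. *)
Lemma exists_min_degree_core (V I : finType) (P : {set I}) (f : I -> {set V}) :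
  (forall i, i \in P -> 0 < #|f i|) -> 4 * #|V| + 1 <= #|P| ->
  exists2 W : {set V}, W != set0 &
    forall v, v \in W -> 5 <= #|[set i in [set i in P | f i \subset W] | v \in f i]|.
Proof.
move=> hf hP; pose dense (W : {set V}) := 4 * #|W| + 1 <= nspan P f W.
have denseT : dense setT.
  rewrite /dense cardsT /nspan (leq_trans hP) // subset_leq_card //.
  by apply/subsetP=> i iP; rewrite inE iP subsetT.
have [W denseW minW] := arg_minnP (fun W : {set V} => #|W|) denseT.
exists W.
  apply: contraTneq denseW => ->; rewrite /dense /nspan cards0.
  rewrite (_ : [set i in P | _] = set0) ?cards0 //; apply/setP=> i; rewrite !inE.
  by apply/andP=> [[iP]]; rewrite subset0 => /eqP fi; have := hf i iP; rewrite fi cards0.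
move=> v vW; set D := [set i in _ | v \in f i].
have span_split : nspan P f W = nspan P f (W :\ v) + #|D|.
  rewrite /nspan -(cardsID [set i | v \in f i] [set i in P | f i \subset W]) addnC.
  congr (_ + _); apply: eq_card => i; rewrite !inE ?subsetD1;
    by case: (i \in P) (f i \subset W) (v \in f i) => [] [] [].
have cardWv : #|W| = #|W :\ v| + 1 by rewrite (cardsD1 v W) vW addnC.
rewrite leqNgt; apply/negP=> sparse_v.
have : dense (W :\ v) by move: denseW; rewrite /dense span_split cardWv; lia.
by move/minW; rewrite cardWv; lia.
Qed.

Section Balls.

Variables (V I : finType) (Q : {set I}) (f : I -> {set V}) (r : V).

Definition nbr (X : {set V}) : {set V} :=
  [set y | [exists j in Q, (y \in f j) && (f j :&: X != set0)]].

Definition ball (n : nat) : {set V} := iter n (fun X => X :|: nbr X) [set r].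

Lemma ballS n : ball n.+1 = ball n :|: nbr (ball n).
Proof. by []. Qed.

Lemma ball_mono m n : m <= n -> ball m \subset ball n.
Proof.
move=> /subnK <-; elim: (n - m) => [|d IH]; first by rewrite add0n.
by rewrite addSn ballS (subset_trans IH) ?subsetUl.
Qed.

Lemma root_in_ball n : r \in ball n.
Proof. by rewrite (subsetP (ball_mono (leq0n n))) ?set11. Qed.

Lemma mem_nbr X y j : j \in Q -> y \in f j -> f j :&: X != set0 -> y \in nbr X.
Proof. by move=> jQ yj meet; rewrite inE; apply/existsP; exists j; rewrite jQ yj. Qed.

Hypothesis edge_le2 : forall i, i \in Q -> #|f i| <= 2.

Section MinDegree.

Variable W : {set V}.
Hypothesis edges_in_W : forall i, i \in Q -> f i \subset W.
Hypothesis root_in_W : r \in W.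
Hypothesis min_degree : forall v, v \in W -> 5 <= #|[set i in Q | v \in f i]|.

Lemma ball_subW n : ball n \subset W.
Proof.
elim: n => [|n IH]; first by rewrite sub1set.
rewrite ballS subUset IH; apply/subsetP=> y; rewrite inE.
by case/existsP=> j /and3P[jQ yj _]; apply: (subsetP (edges_in_W jQ)).
Qed.

(* Every edge meeting [ball n] lies in [ball n.+1] and has at most two
   vertices in [ball n]. *)
Lemma ball_span_growth n : 5 * #|ball n| <= 2 * nspan Q f (ball n.+1).
Proof.
have degrees : 5 * #|ball n| <= \sum_(v in ball n) #|[set j in Q | v \in f j]|.
  rewrite mulnC -sum_nat_const; apply: leq_sum => v vB.
  exact/min_degree/(subsetP (ball_subW n)).
rewrite (leq_trans degrees) // sum_degrees /nspan card_sub_sum big_distrr /=.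
apply: leq_sum => j jQ; have [->|meet] := eqVneq (f j :&: ball n) set0.
  by rewrite cards0.
have -> : f j \subset ball n.+1.
  by apply/subsetP=> y yj; rewrite ballS in_setU (mem_nbr jQ yj meet) orbT.
by rewrite muln1 (leq_trans _ (edge_le2 jQ)) ?subset_leq_card ?subsetIl.
Qed.

Lemma ball_doubling n :
  (forall m, m <= n -> nspan Q f (ball m) <= #|ball m|) -> 2 ^ n <= #|ball n|.
Proof.
elim: n => [|n IH] sparse; first by rewrite cards1.
have := IH (fun m mn => sparse m (leqW mn)); have := sparse n.+1 (leqnn _).
have := ball_span_growth n; rewrite expnS; lia.
Qed.

Lemma exists_dense_ball :
  exists R, 2 ^ R <= 2 * #|V| /\ #|ball R| < nspan Q f (ball R).
Proof.
have exR : exists R, #|ball R| < nspan Q f (ball R).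
  have [/existsP[m dense]|/existsPn sparse] :=
    boolP [exists m : 'I_#|V|.+1, #|ball m| < nspan Q f (ball m)].
    by exists m.
  have : 2 ^ #|V| <= #|ball #|V| |.
    apply: ball_doubling => m mn; rewrite leqNgt.
    exact: (sparse (Ordinal (mn : m < #|V|.+1))).
  move=> /leq_trans/(_ (max_card (mem (ball #|V|)))).
  by rewrite leqNgt ltn_expl.
have [R denseR minR] := ex_minnP exR.
exists R; split=> //; case: R denseR minR => [|R] _ minR.
  by rewrite muln_gt0; apply/card_gt0P; exists r.
rewrite expnS leq_mul2l /= (leq_trans _ (max_card (mem (ball R)))) //.
apply: ball_doubling => m mR; rewrite leqNgt; apply/negP=> /minR; lia.
Qed.

End MinDegree.

End Balls.

Section BreadthFirstTree.

Variables (V I : finType) (Q : {set I}) (f : I -> {set V}) (r : V) (R : nat) (i0 : I).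
Hypothesis edge_size : forall i, i \in Q -> 0 < #|f i| <= 2.

Local Notation B := (ball Q f r).

(* [depth y] is [R.+1] for [y] outside [B R]. *)
Definition depth (y : V) := find (fun i => y \in B i) (iota 0 R.+1).

Lemma depth_le y i : y \in B i -> depth y <= i.
Proof.
move=> yi; rewrite leqNgt; apply/negP=> lt_i.
have i_lt : i < R.+1 by rewrite -(size_iota 0 R.+1) (leq_trans lt_i) ?find_size.
by have := before_find 0 lt_i; rewrite nth_iota // add0n yi.
Qed.

Lemma depth_ball y : y \in B R -> y \in B (depth y).
Proof.
move=> yR; have hasR : has (fun i => y \in B i) (iota 0 R.+1).
  by apply/hasP; exists R; rewrite // mem_iota ltnSn.
have := nth_find 0 hasR; rewrite nth_iota ?add0n //.
by move: hasR; rewrite has_find size_iota.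
Qed.

Lemma depth_lt y i : i < depth y -> y \notin B i.
Proof. by rewrite ltnNge; apply: contra => /depth_le. Qed.

Lemma depth_root : depth r = 0.
Proof. by apply/eqP; rewrite -leqn0 depth_le ?root_in_ball. Qed.

(* The default edge [i0] is only used at the root. *)
Definition parent_pick y :=
  [pick j in Q | (y \in f j) && (f j :&: B (depth y).-1 != set0)].

Definition parent_edge y := odflt i0 (parent_pick y).

Definition parent y :=
  if parent_pick y is Some j then
    (if [pick x in f j :&: B (depth y).-1] is Some x then x else y)
  else y.

Lemma parent_root : parent r = r.
Proof.
rewrite /parent /parent_pick depth_root /=; case: pickP => [j _|_] //.
by case: pickP => [x|_] //; rewrite !inE => /andP[_ /eqP].
Qed.

Lemma parent_edgeP y : y \in B R -> y != r ->
  [/\ parent_edge y \in Q, f (parent_edge y) = [set y; parent y],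
      parent y \in B R & depth (parent y) < depth y].
Proof.
move=> yR yr; have := depth_ball yR; have := depth_le yR.
case edp: (depth y) => [|i] dR yd; first by move: yd; rewrite inE (negbTE yr).
have yi : y \notin B i by apply: depth_lt; rewrite edp.
move: yd; rewrite ballS in_setU (negbTE yi) inE => /existsP[j /and3P[jQ yj meet]].
rewrite /parent_edge /parent /parent_pick edp /=.
case: pickP => [j0 /and3P[j0Q yj0 meet0] | none]; last first.
  by have := none j; rewrite jQ yj meet.
case: pickP => [x /setIP[xj0 xi] | none]; last first.
  by case/set0Pn: meet0 => x; rewrite none.
have xy : x != y by apply: contraNneq yi => <-.
split=> //.
- apply/eqP; rewrite eq_sym eqEcard cards2 eq_sym xy subUset !sub1set yj0 xj0.
  by case/andP: (edge_size j0Q).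
- by rewrite (subsetP (ball_mono Q f r (ltnW dR))).
- by rewrite ltnS depth_le.
Qed.

Lemma parent_in_ball y : y \in B R -> parent y \in B R.
Proof.
move=> yR; have [->|yr] := eqVneq y r; first by rewrite parent_root root_in_ball.
by case: (parent_edgeP yR yr).
Qed.

Lemma iter_parent_root m y : y \in B R -> depth y <= m -> iter m parent y = r.
Proof.
elim: m y => [|m IH] y yR dm.
  by move: (depth_ball yR); rewrite leqn0 in dm; rewrite (eqP dm) inE => /eqP.
rewrite iterSr; have [->|yr] := eqVneq y r.
  by rewrite parent_root IH ?root_in_ball ?depth_root.
have [_ _ pR pd] := parent_edgeP yR yr.
by apply: IH => //; rewrite -ltnS (leq_trans pd dm).
Qed.

Lemma parent_edge_inj : {in B R :\ r &, injective parent_edge}.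
Proof.
move=> y z /setD1P[yr yR] /setD1P[zr zR] same.
have [_ fy _ dy] := parent_edgeP yR yr; have [_ fz _ dz] := parent_edgeP zR zr.
have e : [set y; parent y] = [set z; parent z] by rewrite -fy -fz same.
apply/eqP; apply: contraT => yz.
have /set2P[/eqP|yp] : y \in [set z; parent z] by rewrite -e set21.
  by rewrite (negbTE yz).
have /set2P[/eqP|zp] : z \in [set y; parent y] by rewrite e set21.
  by rewrite eq_sym (negbTE yz).
move: dy dz; rewrite -yp -zp => dy dz.
by have := ltn_trans dy dz; rewrite ltnn.
Qed.

Definition root_path y : {set V} := (fun m : 'I_R.+1 => iter m parent y) @: setT.

Lemma card_root_path y : #|root_path y| <= R.+1.
Proof. by rewrite (leq_trans (leq_imset_card _ _)) // cardsT card_ord. Qed.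

Lemma root_path_self y : y \in root_path y.
Proof. by apply/imsetP; exists ord0. Qed.

Lemma root_path_root y : y \in B R -> r \in root_path y.
Proof.
move=> yR; apply/imsetP; exists (Ordinal (depth_le yR : depth y < R.+1)) => //=.
by rewrite iter_parent_root.
Qed.

Lemma root_path_sub y : y \in B R -> root_path y \subset B R.
Proof.
move=> yR; apply/subsetP=> _ /imsetP[m _ ->].
by elim: (m : nat) => [|n IH] //=; apply: parent_in_ball.
Qed.

Lemma root_path_parent y x : y \in B R -> x \in root_path y -> parent x \in root_path y.
Proof.
move=> yR /imsetP[m _ ->]; rewrite -iterS.
have [mR|Rm] := ltnP m.+1 R.+1; first by apply/imsetP; exists (Ordinal mR).
by rewrite iter_parent_root ?root_path_root // (leq_trans (depth_le yR) (ltnW Rm)).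
Qed.

Definition tree_edges : {set I} := parent_edge @: (B R :\ r).

Lemma tree_span (T : {set V}) (J : {set I}) :
  r \in T -> T \subset B R -> {in T, forall x, parent x \in T} ->
  J \subset [set j in Q | f j \subset T] :\: tree_edges ->
  #|T| + #|J| <= (nspan Q f T).+1.
Proof.
move=> rT TR closedT JT; set A := [set j in Q | f j \subset T].
set X := parent_edge @: (T :\ r).
have cardX : #|X| = #|T :\ r|.
  apply: card_in_imset; apply: sub_in2 parent_edge_inj => y.
  by rewrite !inE => /andP[-> /(subsetP TR)->].
have XA : X \subset A :&: tree_edges.
  apply/subsetP=> _ /imsetP[y /setD1P[yr yT] ->].
  have yR := subsetP TR y yT; have [jQ fj _ _] := parent_edgeP yR yr.
  rewrite !inE jQ fj subUset !sub1set yT closedT //=.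
  by apply/imsetP; exists y; rewrite // !inE yr.
rewrite (cardsD1 r T) rT add1n addSn ltnS -cardX /nspan -/A.
by rewrite -(cardsID tree_edges A) leq_add ?subset_leq_card.
Qed.

Definition tree_hull (X : {set V}) : {set V} := \bigcup_(x in X) root_path x.

Section TreeHull.

Variable X : {set V}.
Hypothesis X_in_ball : X \subset B R.

Lemma tree_hull_sub : tree_hull X \subset B R.
Proof. by apply/bigcupsP=> y yX; apply/root_path_sub/(subsetP X_in_ball). Qed.

Lemma tree_hull_parent : {in tree_hull X, forall x, parent x \in tree_hull X}.
Proof.
move=> x /bigcupP[y yX xy]; apply/bigcupP; exists y => //.
exact: root_path_parent (subsetP X_in_ball y yX) xy.
Qed.

Lemma sub_tree_hull : X \subset tree_hull X.
Proof. by apply/subsetP=> y yX; apply/bigcupP; exists y; rewrite ?root_path_self. Qed.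

Lemma root_in_tree_hull : X != set0 -> r \in tree_hull X.
Proof.
case/set0Pn=> y yX; apply/bigcupP; exists y => //.
exact/root_path_root/(subsetP X_in_ball).
Qed.

End TreeHull.

(* Two edges of the ball outside the spanning tree, together with the tree
   paths from their endpoints to the root, span more edges than vertices. *)
Lemma dense_ball_small_subgraph : #|B R| < nspan Q f (B R) ->
  exists T : {set V}, #|T| <= 4 * R.+1 /\ #|T| < nspan Q f T.
Proof.
move=> dense; set A := [set j in Q | f j \subset B R].
have two_off_tree : 1 < #|A :\: tree_edges|.
  have : #|tree_edges| < #|B R|.
    by rewrite (cardsD1 r (B R)) root_in_ball add1n ltnS leq_imset_card.
  have := subset_leq_card (subsetIr A tree_edges).
  by rewrite cardsD; move: dense; rewrite /nspan -/A; lia.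
have [j1 j1A] : exists j1, j1 \in A :\: tree_edges.
  by apply/card_gt0P; apply: leq_trans two_off_tree.
have [j2 /setD1P[j21 j2A]] : exists j2, j2 \in (A :\: tree_edges) :\ j1.
  by apply/card_gt0P; move: two_off_tree; rewrite (cardsD1 j1) j1A.
set J := [set j1; j2]; set X := \bigcup_(j in J) f j.
have JA : J \subset A :\: tree_edges by rewrite subUset !sub1set j1A j2A.
have inJ j : j \in J -> [/\ j \in Q, f j \subset B R & j \notin tree_edges].
  by move=> /(subsetP JA); rewrite !inE => /andP[-> /andP[-> ->]].
have XR : X \subset B R by apply/bigcupsP=> j /inJ[].
have X0 : X != set0.
  have [j1Q _ _] := inJ j1 (set21 _ _); case/andP: (edge_size j1Q) => /card_gt0P[x xj1] _.
  by apply/set0Pn; exists x; apply/bigcupP; exists j1; rewrite ?set21.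
have cardX : #|X| <= 4.
  have := @card_bigcup_le _ _ J f 2; rewrite cards2 eq_sym j21.
  by apply=> j /inJ[/edge_size/andP[]].
exists (tree_hull X); split.
  rewrite (leq_trans (card_bigcup_le (fun x _ => card_root_path x))) //.
  by rewrite leq_mul2r cardX orbT.
have := tree_span (J := J) (root_in_tree_hull XR X0) (tree_hull_sub XR)
  (tree_hull_parent XR).
rewrite cards2 eq_sym j21 addn2 ltnS; apply; apply/subsetP=> j jJ.
have [jQ _ jT] := inJ j jJ.
rewrite !inE jQ jT /= (subset_trans _ (sub_tree_hull X)) //.
by apply/subsetP=> x xj; apply/bigcupP; exists j.
Qed.

End BreadthFirstTree.

Lemma small_dense_subgraph (V I : finType) (P : {set I}) (f : I -> {set V}) :
  (forall i, i \in P -> 0 < #|f i| <= 2) -> 4 * #|V| + 1 <= #|P| ->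
  exists T : {set V}, #|T| <= 4 * trunc_log 2 #|V| + 8 /\ #|T| < nspan P f T.
Proof.
move=> hf hP; have [i0 _] : exists i0, i0 \in P by apply/card_gt0P; lia.
have [W W0 min_deg] := exists_min_degree_core (fun i iP => (andP (hf i iP)).1) hP.
have [r rW] := set0Pn _ W0.
pose Q := [set i in P | f i \subset W].
have hfQ i : i \in Q -> 0 < #|f i| <= 2 by rewrite inE => /andP[/hf].
have [R [R_small denseR]] : exists R, 2 ^ R <= 2 * #|V| /\
    #|ball Q f r R| < nspan Q f (ball Q f r R).
  apply: exists_dense_ball rW min_deg => [i /hfQ/andP[] //|i].
  by rewrite inE => /andP[].
have [T [cardT denseT]] := dense_ball_small_subgraph i0 hfQ denseR.
exists T; split.
  have n0 : 0 < #|V| by apply/card_gt0P; exists r.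
  have : R <= (trunc_log 2 #|V|).+1 by rewrite -trunc_log2_double // -mul2n trunc_log_max.
  lia.
apply: leq_trans denseT _; apply: subset_leq_card; apply/subsetP=> i.
by rewrite !inE => /andP[/andP[-> _] ->].
Qed.

Lemma nspan_residual (V I : finType) (P : {set I}) (f : I -> {set V}) (T T' : {set V}) :
  nspan P f T + nspan [set i in P | ~~ (f i \subset T)] (fun i => f i :\: T) T'
    <= nspan P f (T :|: T').
Proof.
rewrite /nspan -(cardsID [set i | f i \subset T] [set i in P | f i \subset T :|: T']).
apply: leq_add.
  apply: subset_leq_card; apply/subsetP=> i; rewrite !inE => /andP[-> fT].
  by rewrite (subset_trans fT (subsetUl _ _)) fT.
apply: subset_leq_card; apply/subsetP=> i; rewrite !inE => /andP[/andP[-> nfT] fT'].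
rewrite nfT /=; apply/subsetP=> x xf; rewrite in_setU.
by case: (boolP (x \in T)) => //= xT; apply: (subsetP fT'); rewrite inE xT.
Qed.

Lemma many_small_dense_subgraphs (V I : finType) (P : {set I}) (f : I -> {set V}) g :
  let L := 4 * trunc_log 2 #|V| + 8 in
  (forall i, i \in P -> #|f i| <= 2) -> 4 * #|V| + 1 + g * L.+1 <= #|P| ->
  exists T : {set V}, #|T| <= g * L /\ #|T| + g <= nspan P f T.
Proof.
move=> L hf; elim: g => [|g IH] hP; first by exists set0; rewrite cards0.
have [T [cardT spanT]] : exists T : {set V}, #|T| <= g * L /\ #|T| + g <= nspan P f T.
  by apply: IH; rewrite (leq_trans _ hP) // leq_add2l leq_mul2r leqnSn orbT.
have [denseT|sparseT] := leqP (#|T| + g.+1) (nspan P f T).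
  by exists T; rewrite (leq_trans cardT) ?leq_mul2r ?leqnSn ?orbT.
pose P' := [set i in P | ~~ (f i \subset T)]; pose f' i := f i :\: T.
have hf' i : i \in P' -> 0 < #|f' i| <= 2.
  rewrite inE => /andP[iP nfT]; rewrite card_gt0 setD_eq0 nfT /=.
  by rewrite (leq_trans _ (hf i iP)) ?subset_leq_card ?subsetDl.
have cardP : #|P| = nspan P f T + #|P'|.
  rewrite /nspan -(cardsID [set i | f i \subset T] P); congr (_ + _);
    by apply: eq_card => i; rewrite !inE andbC.
have [T' [cardT' denseT']] : exists T' : {set V}, #|T'| <= L /\ #|T'| < nspan P' f' T'.
  by apply: small_dense_subgraph hf' _; move: hP; rewrite cardP mulSn; lia.
exists (T :|: T'); split.
  by rewrite (leq_trans (leq_card_setU _ _)) // mulSn addnC leq_add.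
have := nspan_residual P f T T'; rewrite -/P' -/f'.
have := leq_of_leqif (leq_card_setU T T'); lia.
Qed.

Lemma nspan_shrunk (V I : finType) (P : {set I}) (f : I -> {set V}) (U T : {set V}) :
  nspan P (fun i => f i :\: U) T <= nspan P f (U :|: T).
Proof.
apply: subset_leq_card; apply/subsetP=> i; rewrite !inE => /andP[-> fT] /=.
apply/subsetP=> x xf; rewrite in_setU; case: (boolP (x \in U)) => //= xU.
by apply: (subsetP fT); rewrite inE xU.
Qed.

Lemma dense_subhypergraph (V I : finType) (P : {set I}) (f : I -> {set V}) c u g :
  let L := 4 * trunc_log 2 #|V| + 8 in
  (forall i, i \in P -> #|f i| <= c + 2) -> 0 < u <= #|V| ->
  #|V| ^ c * (4 * #|V| + 1 + g * L.+1) <= u ^ c * #|P| ->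
  exists S : {set V}, #|S| <= c * u + g * L /\ #|S| + g <= nspan P f S + c * u.
Proof.
move=> L hf /andP[u0 un] many.
have [U [cardU shrunk]] := shrink_edges hf un.
set G := [set i in P | _] in shrunk.
have many_short : 4 * #|V| + 1 + g * L.+1 <= #|G|.
  by rewrite -(@leq_pmul2l (#|V| ^ c)) ?expn_gt0 ?(leq_trans u0) // (leq_trans many).
have [|T [cardT spanT]] :=
  many_small_dense_subgraphs (f := fun i => f i :\: U) _ many_short.
  by move=> i; rewrite inE => /andP[].
exists (U :|: T); split.
  by rewrite (leq_trans (leq_card_setU _ _)) // leq_add.
have GP : nspan G f (U :|: T) <= nspan P f (U :|: T).
  apply: subset_leq_card; apply/subsetP=> i; rewrite !inE.
  by case/andP=> /andP[-> _] ->.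
have := nspan_shrunk G f U T; have := leq_of_leqif (leq_card_setU U T); lia.
Qed.

(** * Choice of parameters *)

Lemma double_leq_exp2 q : 2 * q <= 2 ^ q.
Proof. by elim: q => [|[|q] IH] //; rewrite expnS; lia. Qed.

Lemma triple_leq_exp2S q : 3 * q <= 2 ^ q.+1.
Proof. by elim: q => [|q IH] //; rewrite expnS; have := double_leq_exp2 q.+1; lia. Qed.

Section ShrinkSize.

Variables q lam k : nat.
Hypotheses (q_gt0 : 0 < q) (lam_ge5 : 5 <= lam) (k_large : 2 ^ (q + 4) * lam <= k).

Let u := k %/ (16 * q * lam).

Let d_gt0 : 0 < 16 * q * lam.
Proof. by rewrite !muln_gt0 q_gt0 (leq_trans _ lam_ge5). Qed.

Lemma shrink_size_ge2 : 2 <= u.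
Proof.
rewrite leq_divRL // (leq_trans _ k_large) // expnD.
have -> : 2 * (16 * q * lam) = 2 * q * 2 ^ 4 * lam by ring.
by rewrite leq_mul ?leq_mul ?double_leq_exp2.
Qed.

Lemma shrink_size_large : 2 * k <= u * (2 ^ (q + 5) * lam).
Proof.
have kd : 2 * k <= 2 * u.+1 * (16 * q * lam).
  by rewrite -mulnA leq_mul2l ltnW ?ltn_ceil.
have u3 : 2 * u.+1 <= 3 * u by have := shrink_size_ge2; lia.
apply: (leq_trans kd); apply: (leq_trans (leq_mul u3 (leqnn _))).
have -> : 3 * u * (16 * q * lam) = u * 16 * lam * (3 * q) by ring.
have -> : u * (2 ^ (q + 5) * lam) = u * 16 * lam * 2 ^ q.+1.
  by rewrite (_ : q + 5 = q.+1 + 4) ?expnD ?[2 ^ 4]/=; [ring | lia].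
by rewrite leq_mul2l triple_leq_exp2S orbT.
Qed.

Lemma shrink_size_small : q * u * (16 * lam) <= k.
Proof.
have -> : q * u * (16 * lam) = u * (16 * q * lam) by ring.
exact: leq_trunc_div.
Qed.

End ShrinkSize.

Lemma surplus_budget a D lam P k : 5 <= lam -> a * (16 * lam) <= k -> D * P <= k ->
  16 * lam <= P -> 2 * P <= k -> a + (a + D.+1) * (4 * lam + 9) <= k.
Proof.
move=> lam5 ak DP lamP Pk.
have e1 : 16 * (a * (4 * lam + 10)) <= 6 * k by nia.
have e2 : 16 * (D * (4 * lam + 9)) <= 6 * k by nia.
have e3 : 16 * (4 * lam + 9) <= 3 * k by lia.
nia.
Qed.

Lemma scaled_edge_count q n m k u c : 0 < q -> 0 < k ->
  3 * n * (c * n) ^ q <= m * k ^ q -> 2 * k <= u * c ->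
  n ^ q * (6 * n) <= u ^ q * m.
Proof.
move=> q0 k0 many uc; rewrite -(@leq_pmul2r (k ^ q)) ?expn_gt0 ?k0 //.
have double_pow : 2 * k ^ q <= (2 * k) ^ q.
  by rewrite expnMn leq_mul2r -{1}(expn1 2) leq_pexp2l ?q0 ?orbT.
have -> : n ^ q * (6 * n) * k ^ q = 3 * n * n ^ q * (2 * k ^ q) by ring.
have scaled : 2 * k ^ q <= (u * c) ^ q by rewrite (leq_trans double_pow) ?leq_exp2r.
apply: (leq_trans (leq_mul (leqnn _) scaled)).
have -> : 3 * n * n ^ q * (u * c) ^ q = u ^ q * (3 * n * (c * n) ^ q).
  by rewrite !expnMn; ring.
by rewrite -[u ^ q * m * _]mulnA leq_mul2l many orbT.
Qed.

Lemma spanned_nspan (V : finType) (E : seq {set V}) (S : {set V}) :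
  spanned E S = nspan [set: 'I_(size E)] (fun i => nth set0 E i) S.
Proof.
rewrite /spanned -sum1_count (big_nth set0) big_mkord /nspan -sum1_card.
by apply: eq_bigl => i; rewrite !inE.
Qed.

Lemma trunc_log2_ge5 n k :
  2 <= n -> 32 * trunc_log 2 n <= k -> k <= n -> 5 <= trunc_log 2 n.
Proof.
move=> n2 k_large kn; have lam1 : 1 <= trunc_log 2 n by rewrite trunc_log_max.
by rewrite trunc_log_max // (leq_trans _ kn) // (leq_trans _ k_large) // leq_pmulr.
Qed.

Theorem theorem1p2_nat (V : finType) (E : seq {set V}) (t k : nat) :
  3 <= t -> is_t_hypergraph t E -> 2 <= #|V| -> k <= #|V| ->
  2 ^ (t + 2) * trunc_log 2 #|V| <= k ->
  3 * #|V| * (2 ^ (t + 3) * #|V| * trunc_log 2 #|V|) ^ (t - 2) <= size E * k ^ (t - 2) ->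
  exists S : {set V}, #|S| <= k /\
    #|S| + (k %/ (2 ^ (t + 1) * trunc_log 2 #|V|)).+1 <= spanned E S.
Proof.
move=> t3 hE n2 kn; set n := #|V| in n2 kn *; set lam := trunc_log 2 n.
have [q q0 tq] : exists2 q, 0 < q & t = q + 2 by exists (t - 2); lia.
rewrite tq addnK -!addnA (_ : 2 + 2 = 4) // (_ : 2 + 3 = 5) // (_ : 2 + 1 = 3) //.
move=> k_large many.
have k_large' : 32 * lam <= k.
  rewrite (leq_trans _ k_large) // leq_mul2r; apply/orP; right.
  by rewrite (_ : 32 = 2 ^ 5) // leq_exp2l // addn4.
have lam5 : 5 <= lam := trunc_log2_ge5 n2 k_large' kn.
(* [u] vertices per shrinking round; the greedy surplus [g] also pays for the
   [q * u] shrinking vertices. *)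
pose u := k %/ (16 * q * lam); pose D := k %/ (2 ^ (q + 3) * lam).
pose g := q * u + D.+1.
have u2 : 2 <= u := shrink_size_ge2 q0 lam5 k_large.
have budget : q * u + g * (4 * lam + 9) <= k.
  apply: surplus_budget lam5 (shrink_size_small q lam k) (leq_trunc_div _ _) _ _.
    by rewrite leq_mul2r; apply/orP; right; rewrite (_ : 16 = 2 ^ 4) // leq_exp2l //; lia.
  by rewrite (leq_trans _ k_large) // mulnA (addnS q 3) expnS.
have many_short :
    n ^ q * (4 * n + 1 + g * (4 * lam + 8).+1) <= u ^ q * #|[set: 'I_(size E)]|.
  rewrite cardsT card_ord; have k0 : 0 < k by lia.
  rewrite [2 ^ _ * n * lam]mulnAC in many.
  apply: (leq_trans _ (scaled_edge_count q0 k0 many (shrink_size_large q0 lam5 k_large))).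
  by rewrite leq_mul2l; apply/orP; right; lia.
have [||S [cardS spanS]] := @dense_subhypergraph _ _ [set: 'I_(size E)]
    (fun i => nth set0 E i) q u g _ _ many_short.
- by move=> i _; move/(all_nthP set0): hE => /(_ i (ltn_ord i)) /andP[_]; rewrite tq.
- by rewrite (leq_trans _ u2) // (leq_trans (leq_div _ _)).
rewrite -/n -/lam in cardS; exists S; rewrite spanned_nspan; split.
  have : g * (4 * lam + 8) <= g * (4 * lam + 9) by rewrite leq_mul2l; lia.
  lia.
by move: spanS; rewrite /g /D; lia.
Qed.

(** * From natural numbers to the real statement *)

Lemma INR_muln m n : INR (m * n) = (INR m * INR n)%R.
Proof. by rewrite mulnE mult_INR. Qed.

Lemma INR_expn m e : INR (m ^ e) = (INR m ^ e)%R.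
Proof. by elim: e => [|e IH] //; rewrite expnS INR_muln IH. Qed.

Lemma INR_pow2 e : INR (2 ^ e) = (2 ^ e)%R.
Proof. by rewrite INR_expn. Qed.

Lemma INR_leq m n : m <= n -> (INR m <= INR n)%R.
Proof. by move/leP; apply: le_INR. Qed.

Lemma leq_INR m n : (INR m <= INR n)%R -> m <= n.
Proof. by move/INR_le/leP. Qed.

Lemma trunc_log2_le_log2 n : 0 < n -> (INR (trunc_log 2 n) <= log2 (INR n))%R.
Proof.
move=> n0; have ln2 : (0 < ln 2)%R by rewrite -ln_1; apply: ln_increasing; lra.
rewrite /log2; apply: (Rmult_le_reg_r (ln 2)) => //.
rewrite /Rdiv Rmult_assoc Rinv_l ?Rmult_1_r -?ln_pow; try lra.
have le_n : (2 ^ trunc_log 2 n <= INR n)%R by rewrite -INR_pow2; apply/INR_leq/trunc_logP.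
have [lt|->] := Rle_lt_or_eq_dec _ _ le_n; last lra.
by apply/Rlt_le/ln_increasing => //; apply: pow_lt; lra.
Qed.

Lemma edge_bound_nat n l m k q e (L : R) : 0 < k -> (INR l <= L)%R ->
  (3 * INR n * (2 ^ e * INR n * L / INR k) ^ q <= INR m)%R ->
  3 * n * (2 ^ e * n * l) ^ q <= m * k ^ q.
Proof.
move=> k0 lL many; apply: leq_INR; rewrite !INR_muln !INR_expn !INR_muln INR_pow2.
have k0R : (0 < INR k)%R by apply/lt_0_INR/leP.
have n0 := pos_INR n; have l0 := pos_INR l.
have e0 : (0 <= 2 ^ e)%R by apply: pow_le; lra.
set x := (2 ^ e * INR n * L)%R.
have scale : (x ^ q = (x / INR k) ^ q * INR k ^ q)%R.
  by rewrite -Rpow_mult_distr /Rdiv Rmult_assoc Rinv_l ?Rmult_1_r //; lra.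
apply: (Rle_trans _ (3 * INR n * x ^ q)).
  rewrite (_ : INR 3 = 3%R); last by rewrite INR_IZR_INZ.
  apply: Rmult_le_compat_l; first lra.
  apply: pow_incr; split; first by apply: Rmult_le_pos => //; apply: Rmult_le_pos.
  by apply: Rmult_le_compat_l => //; apply: Rmult_le_pos.
rewrite scale -Rmult_assoc; apply: Rmult_le_compat_r => //.
by apply/pow_le/Rlt_le.
Qed.

Lemma div_le_divn_succ k d (D : R) : 0 < d -> (INR d <= D)%R ->
  (INR k / D <= INR (k %/ d).+1)%R.
Proof.
move=> d0 dD; have d0R : (0 < INR d)%R by apply/lt_0_INR/leP.
have := INR_leq (ltnW (ltn_ceil k d0)); rewrite INR_muln => kd.
apply: (Rmult_le_reg_r D); first lra.
rewrite /Rdiv Rmult_assoc Rinv_l ?Rmult_1_r; last lra.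
by apply: (Rle_trans _ _ _ kd); apply: Rmult_le_compat_l => //; apply: pos_INR.
Qed.

Theorem theorem1p2 (t : nat) (V : finType) (E : seq {set V}) (k : nat) :
  3 <= t ->
  is_t_hypergraph t E ->
  2 <= #|V| ->
  (2 ^ (t + 2) * log2 (INR #|V|) <= INR k)%R ->
  k <= #|V| ->
  (3 * INR #|V| * (2 ^ (t + 3) * INR #|V| * log2 (INR #|V|) / INR k) ^ (t - 2)
     <= INR (size E))%R ->
  exists S : {set V},
    #|S| <= k /\
    (INR #|S| + INR k / (2 ^ (t + 1) * log2 (INR #|V|)) <= INR (spanned E S))%R.
Proof.
move=> t3 hE n2 k_large kn many.
have lam_log := trunc_log2_le_log2 (ltnW n2).
have lam0 : 0 < trunc_log 2 #|V| by rewrite trunc_log_max.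
have pow_ge0 e : (0 <= 2 ^ e)%R by apply: pow_le; lra.
have k_large_nat : 2 ^ (t + 2) * trunc_log 2 #|V| <= k.
  apply: leq_INR; rewrite INR_muln INR_pow2; apply: Rle_trans k_large.
  exact: Rmult_le_compat_l.
have k0 : 0 < k by rewrite (leq_trans _ k_large_nat) // muln_gt0 expn_gt0.
have [S [cardS spanS]] :=
  theorem1p2_nat t3 hE n2 kn k_large_nat (edge_bound_nat k0 lam_log many).
exists S; split=> //; apply: Rle_trans (INR_leq spanS); rewrite plus_INR.
apply/Rplus_le_compat_l/div_le_divn_succ; first by rewrite muln_gt0 expn_gt0.
by rewrite INR_muln INR_pow2; apply: Rmult_le_compat_l.
Qed.
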